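(* Let $n\ge 3$ and $m\ge 3$ with $n\equiv 1$ or $2 \pmod 4$ and $m\equiv 0\pmod 4$. Let $H$ be the graph obtained by identifying one vertex of the cycle $C_n$ with an endpoint of the path $P_m$ (a $1$-clique sum of $C_n$ and $P_m$). Then $v(H)=v(C_n)+v(P_{m-2})-1$.
   Context: For a proper graded ideal $I$ of a standard graded polynomial ring $S$ over a field, the $v$-number is $v(I)=\min\{k\ge 0 : \exists f\in S_k,\ \mathcal P\in\operatorname{Ass}(S/I) \text{ with } (I:f)=\mathcal P\}$. For a finite simple graph $G$, $I(G)$ is the edge ideal generated by $x_ix_j$ over edges $\{x_i,x_j\}$, and $v(G):=v(I(G))$. $P_k$ is the path on $k$ vertices and $C_n$ the cycle on $n$ vertices. A $1$-clique sum of $G_1,G_2$ is $G_1\cup G_2$ where $G_1\cap G_2$ is a single vertex and neither $G_i$ is a single vertex. *)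

From HB Require Import structures.
From mathcomp Require Import all_boot all_algebra.
From mathcomp Require Import mpoly.
From Stdlib Require Import ClassicalEpsilon.

Set Implicit Arguments.
Unset Strict Implicit.
Unset Printing Implicit Defensive.

Import GRing.Theory.
Local Open Scope ring_scope.

(* The standard graded polynomial ring S = k[x_0,...,x_{N-1}] is
   {mpoly k[N]}; subsets of S (in particular ideals) are predicates S -> Prop. *)

Section Ideals.
Variables (k : fieldType) (N : nat).
Local Notation S := {mpoly k[N]}.

Definition prime_ideal (P : S -> Prop) : Prop :=
  [/\ P 0,
      (forall a b, P a -> P b -> P (a + b)),
      (forall r a, P a -> P (r * a)),
      ~ P 1
    & (forall a b, P (a * b) -> P a \/ P b)].

Definition colon (I : S -> Prop) (f : S) : S -> Prop := fun g => I (g * f).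

Definition Ass (I : S -> Prop) (P : S -> Prop) : Prop :=
  prime_ideal P /\ exists f : S, forall g, P g <-> colon I f g.

Definition vnum_witness (I : S -> Prop) (d : nat) : Prop :=
  exists f : S, f \is d.-homog /\
    exists P, Ass I P /\ forall g, colon I f g <-> P g.

Definition is_vnumber (I : S -> Prop) (d : nat) : Prop :=
  vnum_witness I d /\ forall d', vnum_witness I d' -> (d <= d')%N.

Definition vnumber (I : S -> Prop) : nat :=
  epsilon (inhabits 0%N) (fun d => is_vnumber I d).

Definition edge_ideal (e : rel 'I_N) : S -> Prop :=
  fun p => exists c : 'I_N -> 'I_N -> S,
    p = \sum_(i : 'I_N) \sum_(j : 'I_N | e i j) c i j * ('X_i * 'X_j).

End Ideals.

Definition vG (k : fieldType) (N : nat) (e : rel 'I_N) : nat :=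
  vnumber (edge_ideal (k := k) e).

(* The cycle C_n on vertices 0..n-1 (edges {i, i+1 mod n}); simple for n >= 3 *)
Definition cycle_rel (n : nat) : rel 'I_n :=
  fun i j => (j == (i.+1 %% n)%N :> nat) || (i == (j.+1 %% n)%N :> nat).

Definition path_rel (n : nat) : rel 'I_n :=
  fun i j => (j == i.+1 :> nat) || (i == j.+1 :> nat).

(* The 1-clique sum H of C_n and P_m: vertices 0..n+m-2; vertices 0..n-1 form
   the cycle C_n, and vertices n-1, n, ..., n+m-2 form the path P_m, whose
   endpoint n-1 is identified with the cycle vertex n-1. *)
Definition cycle_path_rel (n m : nat) : rel 'I_(n + m - 1) :=
  fun i j =>
    [&& (i < n)%N, (j < n)%N &
        (j == (i.+1 %% n)%N :> nat) || (i == (j.+1 %% n)%N :> nat)]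
    || [&& (n.-1 <= i)%N, (n.-1 <= j)%N &
        (j == i.+1 :> nat) || (i == j.+1 :> nat)].

Arguments cycle_rel n : clear implicits.
Arguments path_rel n : clear implicits.
Arguments cycle_path_rel n m : clear implicits.
Arguments vG k {N} e.

From HB Require Import structures.
From mathcomp Require Import all_boot all_algebra.
From mathcomp Require Import mpoly.
From mathcomp Require Import zify.
From Stdlib Require Import ClassicalEpsilon.

(* For a loopless graph G, v(I(G)) is the least size of a stable set A whose
   neighbourhood N(A) is a vertex cover: for such an A, (I(G) : x^A) is the
   prime ideal generated by the variables of N(A), and conversely the support
   of a monomial outside I(G) of any v-number witness is such a set.
   Double counting edge ends at A, N(A) and the rest of the vertices shows
   that such an A has at least about |V|/4 elements when all degrees are close
   to 2, and taking every fourth vertex attains this bound on C_n, P_K and H.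
   This gives v(C_n) = n/4 + 1, v(P_(m-2)) = m/4 and v(H) = n/4 + m/4 under
   the congruence conditions (integer division). *)

Set Implicit Arguments.
Unset Strict Implicit.
Unset Printing Implicit Defensive.

Import GRing.Theory.

Lemma vnumberE (k : fieldType) (N : nat) (I : {mpoly k[N]} -> Prop) d :
  vnum_witness I d -> (forall d', vnum_witness I d' -> d <= d') ->
  vnumber I = d.
Proof.
move=> wd mind; have vd : is_vnumber I d by [].
have [wv minv] := epsilon_spec (inhabits 0) (is_vnumber I) (ex_intro _ _ vd).
by apply/eqP; rewrite eqn_leq minv // mind.
Qed.

Section Graph.
Variables (T : finType) (e : rel T).

Definition nbhd (A : {set T}) : {set T} := [set j | [exists i in A, e i j]].

Definition stable_set (A : {set T}) : Prop :=
  forall i j, i \in A -> j \in A -> ~~ e i j.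

Definition vertex_cover (C : {set T}) : Prop :=
  forall i j, e i j -> (i \in C) || (j \in C).

Definition vnum_set (A : {set T}) : Prop :=
  stable_set A /\ vertex_cover (nbhd A).

Lemma nbhdP (A : {set T}) j : reflect (exists2 i, i \in A & e i j) (j \in nbhd A).
Proof. by rewrite inE; apply: (iffP exists_inP). Qed.

End Graph.

Section EdgeIdeal.
Variables (k : fieldType) (N : nat) (e : rel 'I_N).
Hypotheses (e_sym : ssrbool.symmetric e) (e_irr : irreflexive e).
Local Notation S := {mpoly k[N]}.
Local Notation I := (edge_ideal (k := k) e).
Local Open Scope ring_scope.

Definition has_edge (m : 'X_{1..N}) : bool :=
  [exists i, [exists j, [&& e i j, (0 < m i)%N & (0 < m j)%N]]].

Lemma edge_ideal0 : I 0.
Proof. by exists (fun _ _ => 0); rewrite big1 // => i _; rewrite big1 // => j _; rewrite mul0r. Qed.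

Lemma edge_idealD p q : I p -> I q -> I (p + q).
Proof.
move=> [c1 ->] [c2 ->]; exists (fun i j => c1 i j + c2 i j).
rewrite -big_split /=; apply: eq_bigr => i _; rewrite -big_split /=.
by apply: eq_bigr => j _; rewrite mulrDl.
Qed.

Lemma edge_idealMl r p : I p -> I (r * p).
Proof.
move=> [c ->]; exists (fun i j => r * c i j).
rewrite mulr_sumr; apply: eq_bigr => i _; rewrite mulr_sumr.
by apply: eq_bigr => j _; rewrite mulrA.
Qed.

Lemma edge_idealXX i j : e i j -> I ('X_i * 'X_j).
Proof.
move=> eij; exists (fun a b => if (a == i) && (b == j) then 1 else 0).
rewrite (bigD1 i) //= [X in _ + X]big1 ?addr0; last first.
  by move=> a /negbTE ai; rewrite big1 // => b _; rewrite ai mul0r.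
rewrite (bigD1 j) //= [X in _ + X]big1 ?addr0; last first.
  by move=> b /andP[_ /negbTE bj]; rewrite eqxx bj mul0r.
by rewrite !eqxx mul1r.
Qed.

Lemma edge_idealX m : has_edge m -> I 'X_[m].
Proof.
case/existsP=> i /existsP[j /and3P[eij mi mj]].
have ij : i != j by apply: contraTneq eij => ->; rewrite e_irr.
have le_m : (U_(i) + U_(j) <= m)%MM.
  apply/mnm_lepP => l; rewrite mnmDE !mnm1E.
  case: (eqVneq i l) => [il|_]; case: (eqVneq j l) => [jl|_] //=.
  - by move: ij; rewrite il jl eqxx.
  - by rewrite -il addn0.
  - by rewrite -jl.
rewrite -(submK le_m) !mpolyXD; apply: edge_idealMl; exact: edge_idealXX.
Qed.

Lemma edge_idealP g : I g <-> {in msupp g, forall m, has_edge m}.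
Proof.
split=> [[c ->] m|edges]; last first.
  rewrite (mpolyE g) big_seq; apply: big_ind => [|p q|m /edges mE].
  - exact: edge_ideal0.
  - exact: edge_idealD.
  - by rewrite -mul_mpolyC; apply: edge_idealMl; exact: edge_idealX.
apply: contraTT => mE; rewrite mcoeff_msupp negbK.
rewrite raddf_sum /= big1 // => i _; rewrite raddf_sum /= big1 // => j eij.
apply/eqP; rewrite mcoeff_eq0; apply: contra mE.
rewrite -mpolyXD (perm_mem (msuppMX _ _)) => /mapP[m' _ ->].
apply/existsP; exists i; apply/existsP; exists j; rewrite eij !mnmDE !mnm1E !eqxx.
by case: (j == i); case: (i == j).
Qed.

(* The prime ideal generated by the variables x_i, i in C, is the kernel of
   the substitution x_i |-> 0 (i in C). *)
Definition kill_vars (C : {set 'I_N}) : N.-tuple S :=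
  [tuple (if i \in C then 0 else 'X_i) | i < N].

Definition meets (C : {set 'I_N}) (m : 'X_{1..N}) : bool :=
  [exists i in C, (0 < m i)%N].

Lemma kill_varsX C m :
  'X_[m] \mPo kill_vars C = if meets C m then 0 else 'X_[m].
Proof.
rewrite comp_mpolyX; case: ifP => [/exists_inP[i iC mi]|mC].
  rewrite (bigD1 i) //= tnth_mktuple iC expr0n.
  by rewrite (negbTE (lt0n_neq0 mi)) mul0r.
rewrite [RHS]mpolyXE_id; apply: eq_bigr => i _; rewrite tnth_mktuple.
case: ifP => // iC; suff -> : m i = 0%N by rewrite !expr0.
by apply/eqP; rewrite -leqn0 leqNgt; apply: contraFN mC => mi; apply/exists_inP; exists i.
Qed.

Lemma kill_vars_eq0 C g :
  g \mPo kill_vars C = 0 <-> {in msupp g, forall m, meets C m}.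
Proof.
split=> [g0 m gm|meetsC]; last first.
  rewrite comp_mpolyEX big1_seq // => m /andP[_ /meetsC mC].
  by rewrite kill_varsX mC scaler0.
apply: contraT => mC; move/(congr1 (mcoeff m)): g0.
rewrite mcoeff0 comp_mpolyEX raddf_sum /= (bigD1_seq m) ?msupp_uniq //=.
rewrite big1 ?addr0 => [|m' m'm]; last first.
  rewrite mcoeffZ kill_varsX; case: ifP => _; first by rewrite mcoeff0 mulr0.
  by rewrite mcoeffX (negbTE m'm) mulr0.
by rewrite mcoeffZ kill_varsX (negbTE mC) mcoeffX eqxx mulr1 => /eqP; rewrite mcoeff_eq0 gm.
Qed.

Lemma prime_kill_vars C : prime_ideal (fun g : S => g \mPo kill_vars C = 0).
Proof.
have comp_mul := fst (comp_mpoly_is_multiplicative (kill_vars C)).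
split=> [|a b a0 b0|r a a0||a b].
- exact: comp_mpoly0.
- by rewrite comp_mpolyD a0 b0 addr0.
- by rewrite comp_mul a0 mulr0.
- by rewrite comp_mpoly1; apply/eqP; rewrite oner_eq0.
- by rewrite comp_mul => /eqP; rewrite mulf_eq0 => /orP[] /eqP; [left|right].
Qed.

Definition mnm_of_set (B : {set 'I_N}) : 'X_{1..N} :=
  [multinom ((i \in B) : nat) | i < N].

Lemma mdeg_mnm_of_set B : mdeg (mnm_of_set B) = #|B|.
Proof.
rewrite mdegE -sum1_card [RHS]big_mkcond /=; apply: eq_bigr => i _.
by rewrite mnmE; case: (i \in B).
Qed.

Lemma colon_mnm_of_set B g : vnum_set e B ->
  colon I 'X_[mnm_of_set B] g <-> g \mPo kill_vars (nbhd e B) = 0.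
Proof.
move=> [Bstable Ncover]; rewrite kill_vars_eq0 /colon /meets edge_idealP; split.
- move=> edges m gm.
  have : has_edge (mnm_of_set B + m)%MM.
    by apply: edges; rewrite mcoeff_msupp mcoeffMX -mcoeff_msupp.
  case/existsP=> i /existsP[j /and3P[eij]]; rewrite !mnmDE !mnmE.
  case: (boolP (i \in B)) => iB; case: (boolP (j \in B)) => jB //= mi mj.
  + by move: (Bstable i j iB jB); rewrite eij.
  + by apply/exists_inP; exists j => //; apply/nbhdP; exists i.
  + by apply/exists_inP; exists i => //; apply/nbhdP; exists j; rewrite // e_sym.
  + by case/orP: (Ncover i j eij) => iN; apply/exists_inP; [exists i|exists j].
- move=> meetsN m'; rewrite (perm_mem (msuppMX _ _)) => /mapP[m /meetsN].
  case/exists_inP=> c /nbhdP[b bB ebc] mc ->.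
  apply/existsP; exists b; apply/existsP; exists c.
  by rewrite ebc !mnmDE !mnmE bB /= addn_gt0 mc orbT.
Qed.

Lemma vnum_witness_of_set B : vnum_set e B -> vnum_witness I #|B|.
Proof.
move=> vB; exists 'X_[mnm_of_set B]; split.
  by apply/dhomogP => m; rewrite msuppX inE => /eqP ->; exact: mdeg_mnm_of_set.
exists (fun g => g \mPo kill_vars (nbhd e B) = 0); split=> [|g]; last first.
  exact: colon_mnm_of_set.
split; first exact: prime_kill_vars.
by exists 'X_[mnm_of_set B] => g; symmetry; exact: colon_mnm_of_set.
Qed.

(* The support B of a monomial of f outside I is stable, and N(B) is a
   vertex cover because x_i x_j in (I : f) forces x_i or x_j into the prime
   (I : f), while x_a in (I : f) forces a into N(B). *)
Lemma vnum_set_of_witness d :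
  vnum_witness I d -> exists2 B, vnum_set e B & (#|B| <= d)%N.
Proof.
move=> [f [f_hom [P [[[_ _ _ P1 Pprime] _] fP]]]].
have [u fu uE] : exists2 u, u \in msupp f & ~~ has_edge u.
  apply/allPn/negP => /allP edges; apply: P1; apply/fP.
  by rewrite /colon mul1r; apply/edge_idealP.
set B := [set i | (0 < u i)%N].
exists B; last first.
  have <- : mdeg u = d := dhomog_mf f_hom fu.
  rewrite mdegE -sum1_card big_mkcond /=.
  by apply: leq_sum => i _; rewrite inE; case: (u i).
have Bstable i j : i \in B -> j \in B -> ~~ e i j.
  rewrite !inE => ui uj; apply: contra uE => eij.
  by apply/existsP; exists i; apply/existsP; exists j; rewrite eij ui uj.
have nbhd_of_P a : P 'X_a -> a \in nbhd e B.
  move/fP; rewrite /colon edge_idealP => edges.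
  have : has_edge (U_(a) + u)%MM.
    by apply: edges; rewrite mulrC mcoeff_msupp mcoeffMX -mcoeff_msupp.
  case/existsP=> i /existsP[j /and3P[eij]]; rewrite !mnmDE !mnm1E.
  case: (eqVneq a i) => [ai|ai]; case: (eqVneq a j) => [aj|aj] /= ui uj.
  + by move: eij; rewrite -ai -aj e_irr.
  + by apply/nbhdP; exists j; rewrite ?inE // e_sym ai.
  + by apply/nbhdP; exists i; rewrite ?inE // aj.
  + have iB : i \in B by rewrite inE.
    have jB : j \in B by rewrite inE.
    by rewrite (negbTE (Bstable i j iB jB)) in eij.
split=> // i j eij.
have : P ('X_i * 'X_j).
  by apply/fP; rewrite /colon mulrC; apply: edge_idealMl; exact: edge_idealXX.
by case/Pprime => /nbhd_of_P ->; rewrite ?orbT.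
Qed.

Lemma vG_eq d :
  (exists2 B, vnum_set e B & #|B| = d) ->
  (forall B, vnum_set e B -> (d <= #|B|)%N) -> vG k e = d.
Proof.
move=> [B vB <-] minB; apply: vnumberE; first exact: vnum_witness_of_set.
by move=> d' /vnum_set_of_witness[B' /minB le_B' le_d']; exact: leq_trans le_d'.
Qed.

End EdgeIdeal.

Section DegreeCounting.
Variables (T : finType) (e : rel T).

Definition deg (v : T) : nat := #|[set w | e v w]|.

(* Truncated subtractions: only degrees above (resp. below) 2 contribute. *)
Definition excess : nat := \sum_w (deg w - 2).
Definition deficit : nat := \sum_w (2 - deg w).

Lemma leq_sum_in (A : {pred T}) (F : T -> nat) :
  \sum_(w in A) F w <= \sum_w F w.
Proof. by rewrite [X in _ <= X](bigID (mem A)) leq_addr. Qed.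

Lemma degE v : deg v = \sum_w (e v w : nat).
Proof. by rewrite /deg -sum1_card big_mkcond; apply: eq_bigr => w _; rewrite inE; case: (e v w). Qed.

Lemma deg_gt0 v a : e v a -> 0 < deg v.
Proof. by move=> eva; apply/card_gt0P; exists a; rewrite inE. Qed.

Lemma two_le_deg v a b : a != b -> e v a -> e v b -> 1 < deg v.
Proof.
move=> ab eva evb; have <- : #|[set a; b]| = 2 by rewrite cards2 ab.
apply: subset_leq_card.
by apply/subsetP => w; rewrite !inE => /orP[] /eqP ->.
Qed.

Lemma card_nbhd_le B : #|nbhd e B| <= \sum_(b in B) deg b.
Proof.
rewrite -sum1_card.
apply: (@leq_trans (\sum_(v in nbhd e B) \sum_(b in B) (e b v : nat))).
  by apply: leq_sum => v /nbhdP[b bB ebv]; rewrite (bigD1 b) //= ebv.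
rewrite exchange_big; apply: leq_sum => b _; rewrite degE; exact: leq_sum_in.
Qed.

(* Every edge leaving the complement of a vertex cover C ends in C. *)
Lemma sum_deg_compl_le (e_sym : ssrbool.symmetric e) C : vertex_cover e C ->
  \sum_(w in ~: C) deg w <= \sum_(v in C) deg v.
Proof.
move=> Ccover.
have -> : \sum_(w in ~: C) deg w = \sum_(w in ~: C) \sum_(v in C) (e w v : nat).
  apply: eq_bigr => w; rewrite inE => wC; rewrite degE (bigID (mem C)) /=.
  rewrite [X in _ + X]big1 ?addn0 // => v vC.
  by case: (boolP (e w v)) => // /Ccover; rewrite (negbTE wC) (negbTE vC).
rewrite exchange_big; apply: leq_sum => v _; rewrite degE.
by apply: leq_trans (leq_sum_in _ _) _; under eq_bigr do rewrite e_sym.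
Qed.

Lemma sum_deg_le (A : {set T}) : \sum_(w in A) deg w <= 2 * #|A| + excess.
Proof.
apply: (@leq_trans (\sum_(w in A) (2 + (deg w - 2)))).
  by apply: leq_sum => w _; lia.
by rewrite big_split sum_nat_const mulnC leq_add2l; exact: leq_sum_in.
Qed.

Lemma sum_deg_ge (A : {set T}) : 2 * #|A| <= \sum_(w in A) deg w + deficit.
Proof.
apply: (@leq_trans (\sum_(w in A) (deg w + (2 - deg w)))).
  by rewrite mulnC -sum_nat_const; apply: leq_sum => w _; lia.
by rewrite big_split leq_add2l; exact: leq_sum_in.
Qed.

Lemma excess_le (A : {set T}) :
  (forall w, deg w <= 2 + (w \in A)) -> excess <= #|A|.
Proof.
move=> degA; rewrite -sum1_card big_mkcond; apply: leq_sum => w _.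
by have := degA w; case: (w \in A) => /=; lia.
Qed.

Lemma deficit_le (A : {set T}) :
  (forall w, 2 <= deg w + (w \in A)) -> deficit <= #|A|.
Proof.
move=> degA; rewrite -sum1_card big_mkcond; apply: leq_sum => w _.
by have := degA w; case: (w \in A) => /=; lia.
Qed.

(* Double counting: |N(B)| <= sum_B deg, and the vertices off the cover N(B)
   carry at most as many edge ends as N(B) itself. *)
Lemma vnum_set_card_ge (e_sym : ssrbool.symmetric e) B : vnum_set e B ->
  2 * #|T| <= 8 * #|B| + 5 * excess + deficit.
Proof.
move=> [_ Ncover].
have NB := card_nbhd_le B.
have compl := sum_deg_compl_le e_sym Ncover.
have degB := sum_deg_le B; have degN := sum_deg_le (nbhd e B).
have degC := sum_deg_ge (~: nbhd e B).
have cardC := cardsC (nbhd e B).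
lia.
Qed.

End DegreeCounting.

Section OrdinalGraph.
Variables (N : nat) (e : rel 'I_N).

Lemma card_le_size (A : {set 'I_N}) (h : nat -> nat) (s : seq nat) :
  {in A &, forall i j : 'I_N, h i = h j -> i = j} ->
  (forall i, i \in A -> h i \in s) -> #|A| <= size s.
Proof.
move=> h_inj hs; rewrite cardE -(size_map (fun i : 'I_N => h i)).
apply: uniq_leq_size.
  by rewrite map_inj_in_uniq ?enum_uniq // => i j; rewrite !mem_enum; exact: h_inj.
by move=> x /mapP[i]; rewrite mem_enum => /hs hi ->.
Qed.

Lemma card_set_pred_le (P : pred nat) (h : nat -> nat) K :
  (forall i j : 'I_N, P i -> P j -> h i = h j -> i = j) ->
  (forall i : 'I_N, P i -> h i < K) -> #|[set i : 'I_N | P i]| <= K.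
Proof.
move=> h_inj hK; rewrite -(size_iota 0 K); apply: (card_le_size (h := h)).
  by move=> i j; rewrite !inE; exact: h_inj.
by move=> i; rewrite inE mem_iota add0n => /hK.
Qed.

Lemma deg_le_size v (s : seq nat) :
  (forall w, e v w -> (w : nat) \in s) -> deg e v <= size s.
Proof.
move=> nbrs_s; apply: (card_le_size (h := id)) => [i j _ _ /val_inj //|i].
by rewrite inE; exact: nbrs_s.
Qed.

Lemma excess_le_size (s : seq nat) :
  (forall w, deg e w <= 2 + ((w : nat) \in s)) -> excess e <= size s.
Proof.
move=> degs; apply: leq_trans (excess_le (A := [set w : 'I_N | (w : nat) \in s]) _) _.
  by move=> w; rewrite inE.
by apply: (card_le_size (h := id)) => [i j _ _ /val_inj //|i]; rewrite inE.
Qed.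

Lemma deficit_le_size (s : seq nat) :
  (forall w, 2 <= deg e w + ((w : nat) \in s)) -> deficit e <= size s.
Proof.
move=> degs; apply: leq_trans (deficit_le (A := [set w : 'I_N | (w : nat) \in s]) _) _.
  by move=> w; rewrite inE.
by apply: (card_le_size (h := id)) => [i j _ _ /val_inj //|i]; rewrite inE.
Qed.

Lemma vnum_set_pred (P Q : pred nat) :
  (forall i j : 'I_N, P i -> P j -> ~~ e i j) ->
  (forall i j : 'I_N, e i j -> Q i || Q j) ->
  (forall v : 'I_N, Q v -> exists2 u : 'I_N, P u & e u v) ->
  vnum_set e [set i : 'I_N | P i].
Proof.
move=> Pstable Qcover Qnbr; split=> [i j|i j /Qcover].
  by rewrite !inE; exact: Pstable.
have inN (v : 'I_N) : Q v -> v \in nbhd e [set i : 'I_N | P i].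
  by case/Qnbr=> u Pu euv; apply/nbhdP; exists u; rewrite ?inE.
by case/orP=> /inN ->; rewrite ?orbT.
Qed.

End OrdinalGraph.

Lemma modSn_small i n : i < n -> i.+1 %% n = if i.+1 == n then 0 else i.+1.
Proof. by move=> lt_in; case: eqP => [->|ne]; rewrite ?modnn // modn_small; lia. Qed.

Section Cycle.
Variable n : nat.
Hypothesis n_ge3 : 2 < n.

Lemma cycle_relE (i j : 'I_n) : cycle_rel n i j =
  [|| (j : nat) == i.+1, (i : nat) == j.+1,
      (i.+1 == n) && (j == 0 :> nat) | (j.+1 == n) && (i == 0 :> nat)].
Proof.
have lt_in := ltn_ord i; have lt_jn := ltn_ord j.
by rewrite /cycle_rel !modSn_small //; case: ifP; case: ifP; lia.
Qed.

Lemma cycle_rel_sym : ssrbool.symmetric (cycle_rel n).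
Proof. by move=> i j; rewrite /cycle_rel orbC. Qed.

Lemma cycle_rel_irr : irreflexive (cycle_rel n).
Proof. by move=> i; have := ltn_ord i; rewrite cycle_relE; lia. Qed.

Lemma deg_cycle (w : 'I_n) : deg (cycle_rel n) w = 2.
Proof.
have lt_wn := ltn_ord w.
set s := if w.+1 == n then 0 else w.+1; set p := if w == 0 :> nat then n.-1 else w.-1.
have sn : s < n by rewrite /s; case: ifP; lia.
have pn : p < n by rewrite /p; case: ifP; lia.
apply/eqP; rewrite eqn_leq; apply/andP; split.
  apply: (@deg_le_size _ _ _ [:: s; p]) => x; have := ltn_ord x.
  by rewrite cycle_relE !inE /s /p; case: ifP; case: ifP; lia.
apply: (@two_le_deg _ _ _ (Ordinal sn) (Ordinal pn)).
- by rewrite -val_eqE /= /s /p; case: ifP; case: ifP; lia.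
- by rewrite cycle_relE /= /s; case: ifP; lia.
- by rewrite cycle_relE /= /p; case: ifP; lia.
Qed.

Lemma vnum_set_cycle_card_ge B : vnum_set (cycle_rel n) B -> n <= 4 * #|B|.
Proof.
move=> vB; have := vnum_set_card_ge cycle_rel_sym vB.
have -> : excess (cycle_rel n) = 0 by rewrite /excess big1 // => w _; rewrite deg_cycle.
have -> : deficit (cycle_rel n) = 0 by rewrite /deficit big1 // => w _; rewrite deg_cycle.
by rewrite card_ord; lia.
Qed.

Hypothesis n_mod4 : (n %% 4 == 1) || (n %% 4 == 2).

(* The vertices 1, 5, 9, ...; when n = 1 mod 4 the vertex n - 2 is added to
   dominate the neighbourhood of the wrap-around edge. *)
Definition cycle_vnum_pred : pred nat :=
  fun i => (i %% 4 == 1) || (n %% 4 == 1) && (i == n - 2).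

Lemma vnum_set_cycle_pred : vnum_set (cycle_rel n) [set i : 'I_n | cycle_vnum_pred i].
Proof.
apply: (@vnum_set_pred _ _ cycle_vnum_pred (fun v => v %% 2 == 0)) => [i j|i j|v v_even].
- by have := ltn_ord i; have := ltn_ord j; rewrite /cycle_vnum_pred cycle_relE; lia.
- by have := ltn_ord i; have := ltn_ord j; rewrite cycle_relE; lia.
- have lt_vn := ltn_ord v.
  set u := if (v %% 4 == 0) && (v.+1 < n) then v.+1 else v.-1.
  have un : u < n by rewrite /u; case: ifP; lia.
  by exists (Ordinal un); rewrite /cycle_vnum_pred ?cycle_relE /= /u; case: ifP; lia.
Qed.

Lemma card_cycle_pred : #|[set i : 'I_n | cycle_vnum_pred i]| <= n %/ 4 + 1.
Proof.
apply: (@card_set_pred_le _ _ (fun i => i.+1 %/ 4)) => [i j|i].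
  by have := ltn_ord i; have := ltn_ord j; rewrite /cycle_vnum_pred => *; apply: ord_inj; lia.
by have := ltn_ord i; rewrite /cycle_vnum_pred; lia.
Qed.

Lemma vG_cycle (k : fieldType) : vG k (cycle_rel n) = n %/ 4 + 1.
Proof.
apply: vG_eq; [exact: cycle_rel_sym|exact: cycle_rel_irr| |].
- exists [set i : 'I_n | cycle_vnum_pred i]; first exact: vnum_set_cycle_pred.
  have := vnum_set_cycle_card_ge vnum_set_cycle_pred; have := card_cycle_pred; lia.
- by move=> B /vnum_set_cycle_card_ge; lia.
Qed.

End Cycle.

Section Path.
Variable K : nat.
Hypothesis K_gt1 : 1 < K.

Lemma path_rel_sym : ssrbool.symmetric (path_rel K).
Proof. by move=> i j; rewrite /path_rel orbC. Qed.

Lemma path_rel_irr : irreflexive (path_rel K).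
Proof. by move=> i; rewrite /path_rel; lia. Qed.

Lemma deg_path_le (w : 'I_K) : deg (path_rel K) w <= 2.
Proof. by apply: (@deg_le_size _ _ _ [:: w.+1; w.-1]) => x; rewrite /path_rel !inE; lia. Qed.

Lemma deg_path_ge (w : 'I_K) : 2 <= deg (path_rel K) w + ((w : nat) \in [:: 0; K.-1]).
Proof.
have lt_wK := ltn_ord w; rewrite !inE.
case: (eqVneq (w : nat) 0) => [w0|w_ne0].
  have oK : 1 < K by [].
  have := @deg_gt0 _ (path_rel K) w (Ordinal oK).
  by rewrite /path_rel /= w0; lia.
case: (eqVneq (w : nat) K.-1) => [wK|w_neK].
  have pK : K.-2 < K by lia.
  have := @deg_gt0 _ (path_rel K) w (Ordinal pK).
  by rewrite /path_rel /= wK; lia.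
have sK : w.+1 < K by lia.
have pK : w.-1 < K by lia.
have := @two_le_deg _ (path_rel K) w (Ordinal sK) (Ordinal pK).
by rewrite -val_eqE /path_rel /=; lia.
Qed.

Lemma vnum_set_path_card_ge B : vnum_set (path_rel K) B -> K <= 4 * #|B| + 1.
Proof.
move=> vB; have := vnum_set_card_ge path_rel_sym vB.
have ex0 : excess (path_rel K) <= 0.
  by apply: (excess_le_size (s := [::])) => w; rewrite in_nil addn0; exact: deg_path_le.
have def2 : deficit (path_rel K) <= 2.
  exact: (deficit_le_size (s := [:: 0; K.-1])) deg_path_ge.
by rewrite card_ord; lia.
Qed.

Hypothesis K_mod4 : K %% 4 == 2.

Definition path_vnum_pred : pred nat := fun i => i %% 4 == 1.

Lemma vnum_set_path_pred : vnum_set (path_rel K) [set i : 'I_K | path_vnum_pred i].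
Proof.
apply: (@vnum_set_pred _ _ path_vnum_pred (fun v => v %% 2 == 0)) => [i j|i j|v v_even].
- by rewrite /path_vnum_pred /path_rel; lia.
- by rewrite /path_rel; lia.
- have lt_vK := ltn_ord v; set u := if v %% 4 == 0 then v.+1 else v.-1.
  have uK : u < K by rewrite /u; case: ifP; lia.
  by exists (Ordinal uK); rewrite /path_vnum_pred /path_rel /= /u; case: ifP; lia.
Qed.

Lemma card_path_pred : #|[set i : 'I_K | path_vnum_pred i]| <= (K + 2) %/ 4.
Proof.
apply: (@card_set_pred_le _ _ (fun i => i %/ 4)) => [i j|i].
  by rewrite /path_vnum_pred => *; apply: ord_inj; lia.
by have := ltn_ord i; rewrite /path_vnum_pred; lia.
Qed.

Lemma vG_path (k : fieldType) : vG k (path_rel K) = (K + 2) %/ 4.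
Proof.
apply: vG_eq; [exact: path_rel_sym|exact: path_rel_irr| |].
- exists [set i : 'I_K | path_vnum_pred i]; first exact: vnum_set_path_pred.
  have := vnum_set_path_card_ge vnum_set_path_pred; have := card_path_pred; lia.
- by move=> B /vnum_set_path_card_ge; lia.
Qed.

End Path.

Section CyclePath.
Variables n m : nat.
Hypotheses (n_ge3 : 2 < n) (m_ge3 : 2 < m).
Local Notation V := (n + m - 1).

Lemma cycle_path_relE (i j : 'I_V) : cycle_path_rel n m i j =
  [&& (i : nat) < n, (j : nat) < n &
      [|| (j : nat) == i.+1, (i : nat) == j.+1,
          (i.+1 == n) && (j == 0 :> nat) | (j.+1 == n) && (i == 0 :> nat)]]
  || [&& n.-1 <= i, n.-1 <= j & ((j : nat) == i.+1) || ((i : nat) == j.+1)].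
Proof.
rewrite /cycle_path_rel; case: (ltnP i n) => lt_in; case: (ltnP j n) => lt_jn //=.
by rewrite !modSn_small //; case: ifP; case: ifP; lia.
Qed.

Lemma cycle_path_rel_sym : ssrbool.symmetric (cycle_path_rel n m).
Proof. by move=> i j; rewrite !cycle_path_relE; lia. Qed.

Lemma cycle_path_rel_irr : irreflexive (cycle_path_rel n m).
Proof. by move=> i; rewrite cycle_path_relE; lia. Qed.

Lemma deg_cycle_path_le (w : 'I_V) :
  deg (cycle_path_rel n m) w <= 2 + ((w : nat) \in [:: n.-1]).
Proof.
have lt_wV := ltn_ord w; rewrite inE.
case: (eqVneq (w : nat) n.-1) => [wc|wc] /=.
  by apply: (@deg_le_size _ _ _ [:: w.+1; w.-1; 0]) => x; rewrite cycle_path_relE !inE; lia.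
case: (eqVneq (w : nat) 0) => w0.
  by apply: (@deg_le_size _ _ _ [:: 1; n.-1]) => x; rewrite cycle_path_relE !inE; lia.
by apply: (@deg_le_size _ _ _ [:: w.+1; w.-1]) => x; rewrite cycle_path_relE !inE; lia.
Qed.

Lemma deg_cycle_path_ge (w : 'I_V) :
  2 <= deg (cycle_path_rel n m) w + ((w : nat) \in [:: V.-1]).
Proof.
have lt_wV := ltn_ord w; rewrite inE.
case: (eqVneq (w : nat) 0) => [w0|w_ne0].
  have oV : 1 < V by lia.
  have cV : n.-1 < V by lia.
  have := @two_le_deg _ (cycle_path_rel n m) w (Ordinal oV) (Ordinal cV).
  by rewrite -val_eqE !cycle_path_relE /= w0; lia.
case: (eqVneq (w : nat) V.-1) => [wz|wz].
  have pV : V.-2 < V by lia.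
  have := @deg_gt0 _ (cycle_path_rel n m) w (Ordinal pV).
  by rewrite cycle_path_relE /= wz; lia.
have sV : w.+1 < V by lia.
have pV : w.-1 < V by lia.
have := @two_le_deg _ (cycle_path_rel n m) w (Ordinal sV) (Ordinal pV).
by rewrite -val_eqE !cycle_path_relE /=; lia.
Qed.

Lemma vnum_set_cycle_path_card_ge B :
  vnum_set (cycle_path_rel n m) B -> V <= 4 * #|B| + 3.
Proof.
move=> vB; have := vnum_set_card_ge cycle_path_rel_sym vB.
have ex1 : excess (cycle_path_rel n m) <= 1.
  exact: (excess_le_size (s := [:: n.-1])) deg_cycle_path_le.
have def1 : deficit (cycle_path_rel n m) <= 1.
  exact: (deficit_le_size (s := [:: V.-1])) deg_cycle_path_ge.
by rewrite card_ord; lia.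
Qed.

Hypotheses (n_mod4 : (n %% 4 == 1) || (n %% 4 == 2)) (m_mod4 : m %% 4 == 0).

Definition cycle_path_vnum_pred : pred nat := fun i => i %% 4 == n %% 4.

Lemma vnum_set_cycle_path_pred :
  vnum_set (cycle_path_rel n m) [set i : 'I_V | cycle_path_vnum_pred i].
Proof.
apply: (@vnum_set_pred _ _ cycle_path_vnum_pred
   (fun v => (v %% 4 == (n + 1) %% 4) || (v %% 4 == (n + 3) %% 4))) => [i j|i j|v vQ].
- by have := ltn_ord i; have := ltn_ord j; rewrite /cycle_path_vnum_pred cycle_path_relE; lia.
- by have := ltn_ord i; have := ltn_ord j; rewrite cycle_path_relE; lia.
- have lt_vV := ltn_ord v; set u := if v %% 4 == (n + 1) %% 4 then v.-1 else v.+1.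
  have uV : u < V by rewrite /u; case: ifP; lia.
  by exists (Ordinal uV); rewrite /cycle_path_vnum_pred ?cycle_path_relE /= /u; case: ifP; lia.
Qed.

Lemma card_cycle_path_pred :
  #|[set i : 'I_V | cycle_path_vnum_pred i]| <= n %/ 4 + m %/ 4.
Proof.
apply: (@card_set_pred_le _ _ (fun i => i %/ 4)) => [i j|i].
  by rewrite /cycle_path_vnum_pred => *; apply: ord_inj; lia.
by have := ltn_ord i; rewrite /cycle_path_vnum_pred; lia.
Qed.

Lemma vG_cycle_path (k : fieldType) :
  vG k (cycle_path_rel n m) = n %/ 4 + m %/ 4.
Proof.
apply: vG_eq; [exact: cycle_path_rel_sym|exact: cycle_path_rel_irr| |].
- exists [set i : 'I_V | cycle_path_vnum_pred i]; first exact: vnum_set_cycle_path_pred.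
  have := vnum_set_cycle_path_card_ge vnum_set_cycle_path_pred.
  have := card_cycle_path_pred; lia.
- by move=> B /vnum_set_cycle_path_card_ge; lia.
Qed.

End CyclePath.

Theorem corollary3p8 (k : fieldType) (n m : nat) :
  (3 <= n)%N -> (3 <= m)%N ->
  (n %% 4 == 1)%N || (n %% 4 == 2)%N -> (m %% 4 == 0)%N ->
  (vG k (cycle_path_rel n m) + 1 =
   vG k (cycle_rel n) + vG k (path_rel (m - 2)))%N.
Proof.
move=> n_ge3 m_ge3 n_mod4 m_mod4.
have K_gt1 : 1 < m - 2 by lia.
have K_mod4 : (m - 2) %% 4 == 2 by lia.
rewrite vG_cycle_path // vG_cycle // vG_path //; lia.
Qed.
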